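(* For a fixed $\tau=\tau_1\ldots\tau_k\in\mathcal{S}_k$ and $n\ge k$, the number $\mathrm{inv}_n(\tau)$ of involutions in $\mathcal{S}_n$ which contain $\tau$ as a subsequence equals $$\sum_{j\in\mathcal{J}(\tau)}\binom{n-k}{k-j}t_{n-2k+j}.$$
   Context: $t_m$ denotes the number of involutions in $\mathcal{S}_m$ ($t_0=1$); terms with $k-j>n-k$ are $0$. A permutation $\pi=\pi_1\ldots\pi_n$ contains $\tau$ as a subsequence if there are indices $i_1<\cdots<i_k$ with $\pi_{i_r}=\tau_r$ for all $r$. The pattern of a word of $j$ distinct letters is its order-preserving relabeling by $\{1,\ldots,j\}$; the length-$j$ initial pattern of $\tau$ is the pattern of $\tau_1\ldots\tau_j$. The $j$-set $\mathcal{J}(\tau)$ of $\tau\in\mathcal{S}_k$ is the set consisting of $0$ together with all $j\in\{1,\ldots,k\}$ such that the length-$j$ initial pattern of $\tau$ is an involution in $\mathcal{S}_j$. *)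

(* Permutations of S_n are {perm 'I_n}, acting on {0,...,n-1}
   (the paper's letters 1..n shifted down by one; all notions below are
   invariant under this shift). *)
From mathcomp Require Import all_boot all_order all_fingroup.
Set Implicit Arguments. Unset Strict Implicit. Unset Printing Implicit Defensive.

Definition perm_word (n : nat) (p : 'S_n) : seq nat :=
  [seq (p i : nat) | i <- enum 'I_n].

Definition is_involution (n : nat) (p : 'S_n) : bool := (p * p == 1)%g.

Definition contains_subseq (k n : nat) (tau : 'S_k) (pi : 'S_n) : bool :=
  subseq (perm_word tau) (perm_word pi).

Definition inv_count (k n : nat) (tau : 'S_k) : nat :=
  #|[set pi : 'S_n | is_involution pi && contains_subseq tau pi]|.

Definition t_inv (m : nat) : nat := #|[set p : 'S_m | is_involution p]|.

Definition pattern (s : seq nat) : seq nat :=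
  [seq count (fun y => y < x) s | x <- s].

Definition is_involution_word (w : seq nat) : bool :=
  perm_eq w (iota 0 (size w)) &&
  all (fun i => nth 0 w (nth 0 w i) == i) (iota 0 (size w)).

Definition Jset (k : nat) (tau : 'S_k) : seq nat :=
  [seq j <- iota 0 k.+1 |
     (j == 0) || is_involution_word (pattern (take j (perm_word tau)))].

(* Let f_n(w) count the involutions of S_n whose letters below k = |w| occur in
   the order w; for w = tau this is inv_n(tau), since tau uses all letters < k.
   Classify an involution of S_(N+2) by the image of its last point N+1: it is
   either fixed, or in a 2-cycle (m, N+1).  Deleting the fixed point, resp. the
   2-cycle, leaves an involution of S_(N+1), resp. S_N.  A 2-cycle with m >= k
   does not touch the restricted word, while m < k forces m to be the last
   letter of w = u m, the rest restricting to the standardization w' of u.  So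
     f_(N+2)(w) = f_(N+1)(w) + (N+1-k) f_N(w) + f_N(w').
   The summands C(n-k, k-j) t_(n+j-2k) obey the same recurrence (Pascal's rule
   and t_(a) = t_(a-1) + (a-1) t_(a-2)), and J(w) agrees with J(w') below k, so
   both sides agree by induction on n, starting from n = k and k = 0. *)

From mathcomp Require Import all_boot all_order all_fingroup.
From mathcomp Require Import zify.
Set Implicit Arguments. Unset Strict Implicit. Unset Printing Implicit Defensive.

Lemma filter_iota_neq m n : m <= n ->
  [seq x <- iota 0 n.+1 | x != m] = map (bump m) (iota 0 n).
Proof.
move=> le_mn; rewrite -(subnKC le_mn) -addnS !iotaD add0n filter_cat map_cat /= eqxx.
rewrite (@eq_in_filter _ _ predT) => [|x]; last by rewrite mem_iota /=; lia.
rewrite (@eq_in_filter _ _ predT (iota m.+1 _)) => [|x]; last by rewrite mem_iota /=; lia.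
rewrite !filter_predT; congr (_ ++ _).
  by rewrite -[LHS]map_id; apply/eq_in_map => x; rewrite mem_iota /bump; lia.
rewrite -[m.+1]add1n iotaDl; apply/eq_in_map => x; rewrite mem_iota /bump /=; lia.
Qed.

Lemma filter_enum_ord_neq n (m : 'I_n.+1) :
  filter (predC1 m) (enum 'I_n.+1) = map (lift m) (enum 'I_n).
Proof.
apply: (inj_map val_inj).
have -> : filter (predC1 m) (enum 'I_n.+1) =
          [seq i <- enum 'I_n.+1 | preim val (predC1 (val m)) i] by [].
rewrite -filter_map val_enum_ord filter_iota_neq; last by rewrite -ltnS ltn_ord.
by rewrite -val_enum_ord -!map_comp.
Qed.

Lemma filter_map_enum_ord n (g : 'I_n.+1 -> nat) (m : 'I_n.+1) (P : pred nat) :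
  ~~ P (g m) ->
  [seq x <- map g (enum 'I_n.+1) | P x] = [seq x <- map (g \o lift m) (enum 'I_n) | P x].
Proof.
move=> nPgm; rewrite (filter_map g) (filter_map (g \o lift m)).
transitivity (map g (filter (preim g P) (filter (predC1 m) (enum 'I_n.+1)))).
  congr map; rewrite -(filter_predI (preim g P) (predC1 m)); apply: eq_filter => x /=.
  by case: (x =P m) => [->|]; rewrite ?(negbTE nPgm) ?andbT.
by rewrite filter_enum_ord_neq (filter_map (lift m)) -map_comp.
Qed.

Lemma count_lt_iota x k : x <= k -> count (fun y => y < x) (iota 0 k) = x.
Proof.
move=> le_xk; rewrite -(subnKC le_xk) iotaD count_cat add0n.
rewrite (@eq_in_count _ _ predT (iota 0 x)) => [|y]; last by rewrite mem_iota => /andP [].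
rewrite (@eq_in_count _ _ pred0 (iota x _)) => [|y]; last by rewrite mem_iota /=; lia.
by rewrite count_predT count_pred0 size_iota addn0.
Qed.

Lemma unbump_mono h x y : x != h -> y != h -> (unbump h x < unbump h y) = (x < y).
Proof. by move=> /eqP ? /eqP ?; rewrite /unbump; apply/idP/idP; lia. Qed.

Lemma map_bump_eq m0 u s : m0 \notin u ->
  (map (bump m0) s == u) = (s == map (unbump m0) u).
Proof.
move=> m0u; apply/eqP/eqP => [<-|->]; first by rewrite -map_comp (eq_map (bumpK m0)) map_id.
rewrite -map_comp -[RHS]map_id; apply/eq_in_map => x xu /=.
by rewrite unbumpK //= inE; apply: contraNneq m0u => <-.
Qed.

Lemma sum_ord_leq n k : \sum_(m < n) (k <= m : nat) = n - k.
Proof.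
elim: n => [|n IH]; first by rewrite big_ord0.
by rewrite big_ord_recr /= IH; case: (leqP k n) => /=; lia.
Qed.

Lemma sum_ord_eq n k : \sum_(m < n) (m == k :> nat : nat) = (k < n).
Proof.
elim: n => [|n IH]; first by rewrite big_ord0.
by rewrite big_ord_recr /= IH ltnS leq_eqVlt; case: (ltngtP k n) => /=; lia.
Qed.

Lemma big_nat_split3 K (P : pred nat) c (A B C D : nat -> nat) :
  (forall j, j < K -> A j = B j + c * C j + D j) -> A K = B K + c * C K ->
  \sum_(0 <= j < K.+1 | P j) A j =
  \sum_(0 <= j < K.+1 | P j) B j + c * \sum_(0 <= j < K.+1 | P j) C j +
  \sum_(0 <= j < K | P j) D j.
Proof.
move=> eqA eqAK; rewrite !(big_mkcond P) /= !big_nat_recr //= eqAK.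
rewrite (@eq_big_nat _ _ _ 0 K _ (fun j => (if P j then B j else 0) +
    c * (if P j then C j else 0) + (if P j then D j else 0))) => [|j /andP [_ /eqA ->]].
  rewrite !big_split /= -big_distrr /=; case: (P K); nia.
by case: (P j); rewrite ?muln0.
Qed.

Definition below (k : nat) (s : seq nat) : seq nat := [seq x <- s | x < k].

Lemma below_bump_ge k m s : k <= m -> below k (map (bump m) s) = below k s.
Proof.
move=> le_km; elim: s => //= x s ->; rewrite /bump.
case: (leqP m x) => le_mx /=; rewrite ?add0n // add1n !ltnNge.
by rewrite (leq_trans le_km le_mx) (leq_trans le_km (leqW le_mx)).
Qed.

Lemma below_bump_lt k m s : m < k -> below k (map (bump m) s) = map (bump m) (below k.-1 s).
Proof.
move=> lt_mk; elim: s => //= x s IH.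
have -> : (bump m x < k) = (x < k.-1) by rewrite /bump; apply/idP/idP; lia.
by case: ifP => _; rewrite IH.
Qed.

Definition is_perm_word (w : seq nat) : bool := uniq w && all (fun x => x < size w) w.

Lemma is_perm_word_iota w : is_perm_word w -> perm_eq w (iota 0 (size w)).
Proof.
case/andP => uw aw; apply: uniq_perm; rewrite ?iota_uniq //.
have sub : {subset w <= iota 0 (size w)}.
  by move=> x xw; rewrite mem_iota add0n (allP aw x xw).
by have [] := uniq_min_size uw sub; rewrite ?size_iota.
Qed.

Lemma is_perm_word_rcons u m0 : is_perm_word (rcons u m0) ->
  [/\ m0 \notin u, m0 <= size u & is_perm_word (map (unbump m0) u)].
Proof.
rewrite /is_perm_word rcons_uniq all_rcons size_rcons ltnS.
case/andP => /andP [m0u uu] /andP [le_m0u lt_u].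
have ne x : x \in u -> x != m0 by move=> xu; apply: contraNneq m0u => <-.
split=> //; rewrite size_map; apply/andP; split.
  rewrite map_inj_in_uniq // => x y xu yu /(congr1 (bump m0)).
  by rewrite !unbumpK //= inE ne.
apply/allP => _ /mapP [x xu ->]; have := allP lt_u x xu; have := ne x xu.
by rewrite /unbump; case: (ltnP m0 x) => /=; lia.
Qed.

Lemma size_perm_word n (p : 'S_n) : size (perm_word p) = n.
Proof. by rewrite size_map size_enum_ord. Qed.

Lemma nth_perm_word n (p : 'S_n) (i : 'I_n) : nth 0 (perm_word p) i = p i.
Proof. by rewrite (nth_map i) ?size_enum_ord ?ltn_ord // nth_ord_enum. Qed.

Lemma perm_word_uniq n (p : 'S_n) : uniq (perm_word p).
Proof. by rewrite map_inj_uniq ?enum_uniq // => i j /val_inj /perm_inj. Qed.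

Lemma is_perm_word_perm n (p : 'S_n) : is_perm_word (perm_word p).
Proof.
by rewrite /is_perm_word perm_word_uniq size_perm_word; apply/allP => x /mapP [i _ ->].
Qed.

Lemma perm_word_inj n : injective (@perm_word n).
Proof.
move=> p q e; apply/permP => i.
by have := congr1 (nth 0 ^~ i) e; rewrite /= !nth_perm_word => /val_inj.
Qed.

Lemma perm_word_surj w : is_perm_word w -> exists p : 'S_(size w), perm_word p = w.
Proof.
case/andP=> uw aw.
pose f (i : 'I_(size w)) : 'I_(size w) := Sub (nth 0 w i) (allP aw _ (mem_nth 0 (ltn_ord i))).
have f_inj : injective f.
  by move=> i j /(congr1 val) /= /eqP; rewrite nth_uniq // => /eqP /val_inj.
exists (perm f_inj); rewrite /perm_word (eq_map (g := nth 0 w \o val)) => [|i].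
  by rewrite map_comp val_enum_ord -{3}(mkseq_nth 0 w).
by rewrite permE.
Qed.

Lemma is_involution_wordE n (p : 'S_n) : is_involution_word (perm_word p) = is_involution p.
Proof.
rewrite /is_involution_word (is_perm_word_iota (is_perm_word_perm p)) /=.
rewrite size_perm_word -val_enum_ord all_map /is_involution.
apply/allP/eqP => [h|h i _] /=.
  apply/permP => i; apply: val_inj; have /eqP := h i (mem_enum _ i).
  by rewrite /= !nth_perm_word permM perm1.
by rewrite /= !nth_perm_word -permM h perm1.
Qed.

Lemma perm_word_rcons N (p : 'S_N.+1) :
  perm_word p = rcons [seq (p (lift ord_max i) : nat) | i <- enum 'I_N] (p ord_max).
Proof.
rewrite /perm_word enum_ordSr map_rcons -map_comp; congr rcons.
by apply: eq_map => i /=; congr (val (p _)); apply: val_inj; rewrite /= /bump leqNgt ltn_ord.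
Qed.

Lemma lift_perm_inj n (i j : 'I_n.+1) : injective (@lift_perm n i j).
Proof.
move=> s t e; apply/permP => k.
by have := congr1 (fun p : 'S_n.+1 => p (lift i k)) e; rewrite /= !lift_perm_lift => /lift_inj.
Qed.

Lemma lift_perm_surj n (p : 'S_n.+1) i : exists s : 'S_n, p = lift_perm i (p i) s.
Proof.
pose f (k : 'I_n) := odflt k (unlift (p i) (p (lift i k))).
have fP k : lift (p i) (f k) = p (lift i k).
  rewrite /f; case: unliftP => [v -> //|].
  by move/perm_inj => /eqP; rewrite eq_sym (negbTE (neq_lift _ _)).
have f_inj : injective f.
  by move=> a b e; apply: (@lift_inj _ i); apply: (@perm_inj _ p); rewrite -!fP e.
exists (perm f_inj); apply/permP => x.
case: (unliftP i x) => [k ->|->]; last by rewrite lift_perm_id.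
by rewrite lift_perm_lift permE fP.
Qed.

Lemma card_lift_perm n (i j : 'I_n.+1) (P : pred 'S_n.+1) :
  #|[set p : 'S_n.+1 | (p i == j) && P p]| = #|[set s : 'S_n | P (lift_perm i j s)]|.
Proof.
rewrite -(card_imset _ (@lift_perm_inj n i j)); apply: eq_card => p.
rewrite inE; apply/andP/imsetP => [[/eqP pij Pp]|[s]].
  have [s ps] := lift_perm_surj p i; exists s; last by rewrite ps pij.
  by rewrite inE -pij -ps.
by rewrite inE => Ps ->; rewrite lift_perm_id.
Qed.

Lemma is_involution_lift_perm n (i : 'I_n.+1) (s : 'S_n) :
  is_involution (lift_perm i i s) = is_involution s.
Proof.
by rewrite /is_involution lift_permM -(lift_perm1 i) (inj_eq (@lift_perm_inj _ i i)).
Qed.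

Lemma perm_word_lift_max n (s : 'S_n) :
  perm_word (lift_perm ord_max ord_max s) = rcons (perm_word s) n.
Proof.
rewrite perm_word_rcons lift_perm_id; congr rcons.
by apply: eq_map => i; rewrite lift_perm_lift lift_max.
Qed.

(* [add_2cycle m r] adjoins the 2-cycle (m, N+1) to r, relabelling r on the
   remaining letters in an order-preserving way. *)
Definition add_2cycle N (m : 'I_N.+1) (r : 'S_N) : 'S_N.+2 :=
  lift_perm ord_max (lift ord_max m) (lift_perm m ord_max r).

Section Add2Cycle.
Variables (N : nat) (m : 'I_N.+1) (r : 'S_N).

Lemma add_2cycle_max : add_2cycle m r ord_max = lift ord_max m.
Proof. by rewrite /add_2cycle lift_perm_id. Qed.

Lemma add_2cycle_m : add_2cycle m r (lift ord_max m) = ord_max.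
Proof.
rewrite /add_2cycle lift_perm_lift lift_perm_id; apply: val_inj => /=.
by have := ltn_ord m; rewrite /bump; lia.
Qed.

Lemma add_2cycle_lift y :
  add_2cycle m r (lift ord_max (lift m y)) = lift ord_max (lift m (r y)).
Proof.
rewrite /add_2cycle !lift_perm_lift; apply: val_inj => /=.
by have := ltn_ord (r y); have := ltn_ord m; rewrite /bump; lia.
Qed.

Lemma is_involution_add_2cycle : is_involution (add_2cycle m r) = is_involution r.
Proof.
rewrite /is_involution; apply/eqP/eqP => h.
  apply/permP => y; have := congr1 (fun p : 'S_N.+2 => p (lift ord_max (lift m y))) h.
  by rewrite !permM !add_2cycle_lift perm1 => /lift_inj /lift_inj; rewrite -permM perm1.
apply/permP => x; rewrite permM perm1.
case: (unliftP ord_max x) => [x' ->|->]; last by rewrite add_2cycle_max add_2cycle_m.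
case: (unliftP m x') => [y ->|->]; last by rewrite add_2cycle_m add_2cycle_max.
by rewrite !add_2cycle_lift -permM h perm1.
Qed.

End Add2Cycle.

Lemma below_perm_word_add_2cycle N (m : 'I_N.+1) (r : 'S_N) k : k <= N.+1 ->
  below k (perm_word (add_2cycle m r)) = below k (rcons (map (bump m) (perm_word r)) m).
Proof.
move=> le_kN.
have drop_N1 : below k [seq val (add_2cycle m r (lift ord_max i)) | i <- enum 'I_N.+1] =
               below k (map (bump m) (perm_word r)).
  rewrite /below (@filter_map_enum_ord _ _ m); last by rewrite /= add_2cycle_m -leqNgt.
  rewrite /perm_word -map_comp; congr filter.
  by apply: eq_map => y /=; rewrite add_2cycle_lift lift_max.
by rewrite perm_word_rcons add_2cycle_max lift_max /below !filter_rcons -!/(below k _) drop_N1.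
Qed.

Lemma involution_lift_perm_max N (m : 'I_N.+1) (s : 'S_N.+1) :
  is_involution (lift_perm ord_max (lift ord_max m) s) -> s m = ord_max.
Proof.
move=> /eqP /(congr1 (fun p : 'S_N.+2 => val (p ord_max))).
rewrite permM perm1 lift_perm_id lift_perm_lift /= => e.
apply: val_inj => /=; move: e (ltn_ord m) (ltn_ord (s m)); rewrite /bump; lia.
Qed.

Lemma card_involution_S N (P : pred 'S_N.+1) :
  #|[set p : 'S_N.+1 | is_involution p && P p]| =
  #|[set s : 'S_N | is_involution s && P (lift_perm ord_max ord_max s)]| +
  \sum_(m < N) #|[set p : 'S_N.+1 | (p ord_max == lift ord_max m) && (is_involution p && P p)]|.
Proof.
rewrite -sum1dep_card (partition_big (fun p : 'S_N.+1 => p ord_max) xpredT) //=.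
rewrite big_ord_recr /= addnC; congr (_ + _).
  rewrite sum1dep_card.
  transitivity #|[set p : 'S_N.+1 | (p ord_max == ord_max) && (is_involution p && P p)]|.
    by apply: eq_card => p; rewrite !inE andbC.
  by rewrite card_lift_perm; apply: eq_card => s; rewrite !inE is_involution_lift_perm.
apply: eq_bigr => m _; rewrite sum1dep_card; apply: eq_card => p.
have -> : widen_ord (leqnSn N) m = lift ord_max m.
  by apply: val_inj; rewrite /= /bump leqNgt ltn_ord.
by rewrite !inE andbC.
Qed.

Lemma card_involution_2cycle N (m : 'I_N.+1) (P : pred 'S_N.+2) :
  #|[set p : 'S_N.+2 | (p ord_max == lift ord_max m) && (is_involution p && P p)]| =
  #|[set r : 'S_N | is_involution r && P (add_2cycle m r)]|.
Proof.
rewrite card_lift_perm.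
transitivity #|[set s : 'S_N.+1 | (s m == ord_max) &&
     (is_involution (lift_perm ord_max (lift ord_max m) s) &&
      P (lift_perm ord_max (lift ord_max m) s))]|.
  apply: eq_card => s; rewrite !inE.
  by case h: (is_involution _); rewrite ?andbF //= (involution_lift_perm_max h) eqxx.
rewrite card_lift_perm; apply: eq_card => r; rewrite !inE.
by rewrite -[lift_perm ord_max (lift ord_max m) _]/(add_2cycle m r) is_involution_add_2cycle.
Qed.

Lemma t_inv_rec a : 0 < a -> t_inv a = t_inv a.-1 + a.-1 * t_inv a.-2.
Proof.
have tE n : t_inv n = #|[set p : 'S_n | is_involution p && predT p]|.
  by apply: eq_card => p; rewrite !inE andbT.
case: a => [|[|N]] // _; rewrite [LHS]tE card_involution_S.
  by rewrite big_ord0 /= mul0n !addn0 tE.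
rewrite (eq_bigr (fun _ => t_inv N)) => [|m _]; last by rewrite card_involution_2cycle tE.
by rewrite sum_nat_const card_ord mulnC [t_inv N.+1]tE.
Qed.

Definition inv_restr_count n (w : seq nat) : nat :=
  #|[set p : 'S_n | is_involution p && (below (size w) (perm_word p) == w)]|.

Lemma inv_count_restr k n (tau : 'S_k) : inv_count n tau = inv_restr_count n (perm_word tau).
Proof.
apply: eq_card => p; rewrite !inE /contains_subseq size_perm_word; congr (_ && _).
have tauE : [seq x <- perm_word p | x \in perm_word tau] = below k (perm_word p).
  apply: eq_filter => x; have := is_perm_word_iota (is_perm_word_perm tau).
  by rewrite size_perm_word => /perm_mem ->; rewrite mem_iota.
by rewrite -tauE eq_sym; apply/(subseq_uniqP (perm_word_uniq p))/eqP.
Qed.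

Lemma t_inv_restr n : t_inv n = inv_restr_count n [::].
Proof.
by apply: eq_card => p; rewrite !inE /below (@eq_in_filter _ _ pred0) ?filter_pred0 ?andbT.
Qed.

Lemma inv_restr_count_size w :
  is_perm_word w -> inv_restr_count (size w) w = is_involution_word w.
Proof.
move=> /perm_word_surj [p0 <-]; rewrite /inv_restr_count size_perm_word is_involution_wordE.
rewrite (eq_card (B := [set p | is_involution p && (p == p0)])) => [|p]; last first.
  rewrite !inE /below (@eq_in_filter _ _ predT) ?filter_predT ?(inj_eq (@perm_word_inj _)) //.
  by move=> x /mapP [i _ ->]; rewrite /= ltn_ord.
case: (boolP (is_involution p0)) => inv_p0.
  by apply/eqP/cards1P; exists p0; apply/setP => p; rewrite !inE andb_idl // => /eqP ->.
apply/eqP; rewrite cards_eq0; apply/eqP/setP => p; rewrite !inE.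
by apply: contraNF inv_p0 => /andP [inv_p /eqP <-].
Qed.

Lemma t_inv0 : t_inv 0 = 1.
Proof. by rewrite t_inv_restr (inv_restr_count_size (w := [::])). Qed.

Definition inv_restr_count_2cycle N (m : 'I_N.+1) (w : seq nat) : nat :=
  #|[set r : 'S_N | is_involution r && (below (size w) (perm_word (add_2cycle m r)) == w)]|.

Lemma inv_restr_count_SS N w : size w <= N.+1 ->
  inv_restr_count N.+2 w = inv_restr_count N.+1 w + \sum_(m < N.+1) inv_restr_count_2cycle m w.
Proof.
move=> le_wN; rewrite /inv_restr_count card_involution_S; congr (_ + _).
  apply: eq_card => s; rewrite !inE perm_word_lift_max /below filter_rcons.
  by rewrite ltnNge le_wN.
by apply: eq_bigr => m _; rewrite card_involution_2cycle.
Qed.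

Lemma inv_restr_count_2cycle_ge N (m : 'I_N.+1) w : size w <= m ->
  inv_restr_count_2cycle m w = inv_restr_count N w.
Proof.
move=> le_wm; apply: eq_card => r; rewrite !inE below_perm_word_add_2cycle; last first.
  exact: leq_trans le_wm (ltnW (ltn_ord m)).
by rewrite /below filter_rcons ltnNge le_wm /= -/(below _ _) below_bump_ge.
Qed.

Lemma inv_restr_count_2cycle_lt N (m : 'I_N.+1) u m0 :
  m <= size u -> size u <= N -> m0 \notin u ->
  inv_restr_count_2cycle m (rcons u m0) =
    (m == m0 :> nat) * inv_restr_count N (map (unbump m0) u).
Proof.
move=> le_mu le_uN m0u.
have restrE r : (below (size (rcons u m0)) (perm_word (add_2cycle m r)) == rcons u m0) =
    (m == m0 :> nat) && (below (size (map (unbump m0) u)) (perm_word r) == map (unbump m0) u).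
  rewrite size_rcons below_perm_word_add_2cycle // /below filter_rcons ltnS le_mu.
  rewrite eqseq_rcons andbC -/(below _ _) below_bump_lt //=.
  by case: eqP => [->|] //=; rewrite map_bump_eq // size_map.
rewrite /inv_restr_count_2cycle /inv_restr_count; have [em|nem] := eqVneq (m : nat) m0.
  by rewrite mul1n; apply: eq_card => r; rewrite !inE restrE em eqxx.
rewrite mul0n; apply/eqP; rewrite cards_eq0; apply/eqP/setP => r.
by rewrite !inE restrE (negbTE nem) andbF.
Qed.

Lemma inv_restr_count_rcons N u m0 : size u <= N -> is_perm_word (rcons u m0) ->
  inv_restr_count N.+2 (rcons u m0) =
    inv_restr_count N.+1 (rcons u m0) + (N.+1 - (size u).+1) * inv_restr_count N (rcons u m0) +
    inv_restr_count N (map (unbump m0) u).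
Proof.
move=> le_uN /is_perm_word_rcons [m0u le_m0u _].
rewrite inv_restr_count_SS ?size_rcons // -addnA; congr (_ + _).
rewrite (eq_bigr (fun m : 'I_N.+1 => ((size u).+1 <= m : nat) * inv_restr_count N (rcons u m0) +
    (m == m0 :> nat : nat) * inv_restr_count N (map (unbump m0) u))) => [|m _].
  rewrite big_split /= -!big_distrl /= sum_ord_leq sum_ord_eq.
  by rewrite ltnS (leq_trans le_m0u le_uN) mul1n.
case: (leqP (size u).+1 m) => [le_um|].
  rewrite inv_restr_count_2cycle_ge ?size_rcons //; have /negbTE -> : (m : nat) != m0 by lia.
  by rewrite mul1n addn0.
by rewrite ltnS => le_mu; rewrite inv_restr_count_2cycle_lt // mul0n.
Qed.

Lemma pattern_map (f : nat -> nat) s :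
  {in s &, forall x y, (f x < f y) = (x < y)} -> pattern (map f s) = pattern s.
Proof.
move=> f_mono; rewrite /pattern -map_comp; apply/eq_in_map => x xs /=.
by rewrite count_map; apply/eq_in_count => y ys /=; rewrite f_mono.
Qed.

Lemma pattern_perm_word w : is_perm_word w -> pattern w = w.
Proof.
move=> ww; have /seq.permP w_iota := is_perm_word_iota ww.
rewrite /pattern -[RHS]map_id; apply/eq_in_map => x xw /=.
by rewrite w_iota count_lt_iota // ltnW // (allP (proj2 (andP ww))).
Qed.

Definition initial_involution (w : seq nat) (j : nat) : bool :=
  (j == 0) || is_involution_word (pattern (take j w)).

Lemma initial_involution_rcons u m0 j : j <= size u -> m0 \notin u ->
  initial_involution (rcons u m0) j = initial_involution (map (unbump m0) u) j.
Proof.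
move=> le_ju m0u.
rewrite /initial_involution -cats1 takel_cat // -map_take pattern_map //.
have ne x : x \in take j u -> x != m0 by move/mem_take => xu; apply: contraNneq m0u => <-.
by move=> x y /ne x_m0 /ne y_m0; apply: unbump_mono.
Qed.

Definition jterm (t : nat -> nat) (k n j : nat) : nat := 'C(n - k, k - j) * t (n + j - 2 * k).

Section JTermRec.
Variable t : nat -> nat.
Hypothesis t_rec : forall a, 0 < a -> t a = t a.-1 + a.-1 * t a.-2.

Lemma jterm_rec N k j : 0 < k -> j < k -> k <= N.+1 ->
  jterm t k N.+2 j = jterm t k N.+1 j + (N.+1 - k) * jterm t k N j + jterm t k.-1 N j.
Proof.
move=> k_gt0 lt_jk le_kN; rewrite /jterm.
have [a ea] : exists a, N.+2 - k = a.+1 by exists (N.+1 - k); lia.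
have [b eb] : exists b, k - j = b.+1 by exists (k - j).-1; lia.
have -> : N.+1 - k = a by lia.
have -> : N - k = a.-1 by lia.
have -> : N - k.-1 = a by lia.
have -> : k.-1 - j = b by lia.
rewrite ea eb binS; case: (ltnP a b) => [lt_ab|le_ba].
  by rewrite !(@bin_small a) ?(@bin_small a.-1) //; lia.
have -> : N.+2 + j - 2 * k = a - b by lia.
have -> : N.+1 + j - 2 * k = (a - b).-1 by lia.
have -> : N + j - 2 * k = (a - b).-2 by lia.
have -> : N + j - 2 * k.-1 = a - b by lia.
case: (ltnP b a) => [lt_ba|le_ab]; last first.
  have -> : a = b by lia.
  by rewrite subnn (@bin_small b) ?(@bin_small b.-1) //; lia.
have := mul_bin_down a b.+1; have -> : a - b.+1 = (a - b).-1 by lia.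
by rewrite (t_rec (a := a - b)); [nia | lia].
Qed.

Lemma jterm_rec_diag N k : k <= N.+1 ->
  jterm t k N.+2 k = jterm t k N.+1 k + (N.+1 - k) * jterm t k N k.
Proof.
move=> le_kN; rewrite /jterm subnn !bin0 !mul1n.
have -> : N.+2 + k - 2 * k = N.+2 - k by lia.
have -> : N.+1 + k - 2 * k = (N.+2 - k).-1 by lia.
have -> : N + k - 2 * k = (N.+2 - k).-2 by lia.
by rewrite (t_rec (a := N.+2 - k)); [congr (_ + _ * _); lia | lia].
Qed.

End JTermRec.

Definition jsum (k n : nat) (w : seq nat) : nat :=
  \sum_(j <- [seq j <- iota 0 k.+1 | initial_involution w j]) jterm t_inv k n j.

Lemma jsumE k n w :
  jsum k n w = \sum_(0 <= j < k.+1 | initial_involution w j) jterm t_inv k n j.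
Proof. by rewrite /jsum big_filter. Qed.

Lemma jsum_nil n : jsum 0 n [::] = t_inv n.
Proof. by rewrite /jsum /= big_seq1 /jterm bin0 mul1n addn0 muln0 subn0. Qed.

Lemma jsum_size w : is_perm_word w -> jsum (size w) (size w) w = is_involution_word w.
Proof.
move=> ww; rewrite jsumE big_mkcond big_nat_recr //= big1_seq => [|j]; last first.
  rewrite mem_index_iota /= => lt_jw.
  by case: ifP; rewrite // /jterm subnn bin0n subn_eq0 leqNgt lt_jw.
rewrite /jterm subnn bin0 addnn -mul2n subnn t_inv0 /initial_involution take_size.
by rewrite pattern_perm_word //; case: eqP => [/size0nil ->|_] //=; case: is_involution_word.
Qed.

Lemma jsum_rcons N u m0 : size u <= N -> m0 \notin u ->
  jsum (size u).+1 N.+2 (rcons u m0) =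
    jsum (size u).+1 N.+1 (rcons u m0) + (N.+1 - (size u).+1) * jsum (size u).+1 N (rcons u m0) +
    jsum (size u) N (map (unbump m0) u).
Proof.
move=> le_uN m0u; rewrite !jsumE.
have -> : \sum_(0 <= j < (size u).+1 | initial_involution (map (unbump m0) u) j)
             jterm t_inv (size u) N j =
          \sum_(0 <= j < (size u).+1 | initial_involution (rcons u m0) j)
             jterm t_inv (size u) N j.
  rewrite big_nat_cond [RHS]big_nat_cond; apply: eq_bigl => j /=.
  by apply: andb_id2l => lt_ju; rewrite initial_involution_rcons // -ltnS.
apply: big_nat_split3 => [j lt_ju|]; last exact: jterm_rec_diag t_inv_rec _ _ _.
exact: jterm_rec t_inv_rec _ _ _ _ _ _.
Qed.

Lemma inv_restr_count_jsum n w : is_perm_word w -> size w <= n ->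
  inv_restr_count n w = jsum (size w) n w.
Proof.
elim/ltn_ind: n w => n IH; case/lastP => [|u m0] ww le_wn.
  by rewrite jsum_nil t_inv_restr.
have [m0u _ ww'] := is_perm_word_rcons ww.
move: le_wn; rewrite leq_eqVlt => /orP [/eqP <-|].
  by rewrite inv_restr_count_size ?jsum_size.
rewrite size_rcons; case: n IH => [|[|N]] IH // /ltnSE le_uN.
rewrite inv_restr_count_rcons // jsum_rcons // (IH N.+1) ?size_rcons //.
rewrite [inv_restr_count N (map _ _)](IH N) ?size_map //.
case: (ltnP (size u) N) => [lt_uN|le_Nu]; first by rewrite (IH N) ?size_rcons.
by have -> : N.+1 - (size u).+1 = 0 by lia.
Qed.

Theorem mainTheorem3 (k n : nat) (tau : 'S_k) (hkn : k <= n) :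
  inv_count n tau =
  \sum_(j <- Jset tau) 'C(n - k, k - j) * t_inv (n + j - 2 * k).
Proof.
by rewrite inv_count_restr inv_restr_count_jsum ?is_perm_word_perm ?size_perm_word.
Qed.
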